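(* Let $P,W$ be finite point sets in the plane such that no two distinct points of $P\cup W$ have equal $x$-coordinate or equal $y$-coordinate, and let $p,q\in P$ be distinct. If there is $w\in W$ with $x(w)$ strictly between $x(p)$ and $x(q)$, or with $y(w)$ strictly between $y(p)$ and $y(q)$, then $pq$ is an edge of $\mathrm{SG}^+(P,W)$.
   Context: For finite point sets $P$ (vertices) and $W$ (witnesses) in $\mathbb{R}^2$ (which may share points), the square graph $\mathrm{SG}^+(P,W)$ is the graph with vertex set $P$ in which distinct $x,y\in P$ are adjacent if and only if there is an axis-aligned square with $x$ and $y$ on its boundary whose interior contains at least one point of $W$. $x(\cdot)$ and $y(\cdot)$ denote coordinates. *)

From Stdlib Require Import Reals List.
Open Scope R_scope.

Definition point := (R * R)%type.
Definition xc (p : point) : R := fst p.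
Definition yc (p : point) : R := snd p.

Definition in_closed_square (a b s : R) (p : point) : Prop :=
  a <= xc p <= a + s /\ b <= yc p <= b + s.

Definition on_square_boundary (a b s : R) (p : point) : Prop :=
  in_closed_square a b s p /\
  (xc p = a \/ xc p = a + s \/ yc p = b \/ yc p = b + s).

Definition in_square_interior (a b s : R) (p : point) : Prop :=
  a < xc p < a + s /\ b < yc p < b + s.

Definition SGplus_edge (P W : list point) (u v : point) : Prop :=
  In u P /\ In v P /\ u <> v /\
  exists a b s, 0 < s /\
    on_square_boundary a b s u /\ on_square_boundary a b s v /\
    exists w, In w W /\ in_square_interior a b s w.

Definition general_position (P W : list point) : Prop :=
  forall u v, In u (P ++ W) -> In v (P ++ W) -> u <> v ->
    xc u <> xc v /\ yc u <> yc v.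

Definition strictly_between (t a b : R) : Prop :=
  (a < t < b) \/ (b < t < a).

(* For x(p) < x(w) < x(q), take a very large square with p on its left side
   and q on its bottom side (if y(q) < y(w)), or with q on its right side and
   p on its top side (if y(w) < y(p)); since y(p) <> y(q), one of these fits.
   Exchanging the two coordinates turns the y-case into the x-case. *)
From Stdlib Require Import Reals List Lra.
Open Scope R_scope.

Definition witness_square (p q w : point) : Prop :=
  exists a b s, 0 < s /\
    on_square_boundary a b s p /\ on_square_boundary a b s q /\
    in_square_interior a b s w.

Definition swap_xy (p : point) : point := (yc p, xc p).

Lemma witness_square_sym (p q w : point) :
  witness_square p q w -> witness_square q p w.
Proof. intros (a & b & s & Hs & Hp & Hq & Hw). exists a, b, s; auto. Qed.

Lemma on_square_boundary_swap_xy (a b s : R) (p : point) :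
  on_square_boundary b a s (swap_xy p) -> on_square_boundary a b s p.
Proof. unfold on_square_boundary, in_closed_square; cbn; tauto. Qed.

Lemma in_square_interior_swap_xy (a b s : R) (p : point) :
  in_square_interior b a s (swap_xy p) -> in_square_interior a b s p.
Proof. unfold in_square_interior; cbn; tauto. Qed.

Lemma witness_square_swap_xy (p q w : point) :
  witness_square (swap_xy p) (swap_xy q) (swap_xy w) -> witness_square p q w.
Proof.
  intros (a & b & s & Hs & Hp & Hq & Hw); exists b, a, s.
  auto using on_square_boundary_swap_xy, in_square_interior_swap_xy.
Qed.

Ltac square_arith :=
  unfold on_square_boundary, in_closed_square, in_square_interior; cbn;
  repeat split;
  first [ lra | left; lra | right; left; lra
        | right; right; left; lra | right; right; right; lra ].

Lemma witness_square_of_x_between (p q w : point) :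
  xc p < xc w < xc q -> yc p <> yc q -> witness_square p q w.
Proof.
  destruct p as [x1 y1], q as [x2 y2], w as [xw yw]; unfold xc, yc; cbn.
  intros Hx Hy.
  set (s := x2 - x1 + Rabs (y1 - y2) + Rabs (yw - y1) + Rabs (yw - y2) + 1).
  assert (Hs : x2 - x1 < s /\ Rabs (y1 - y2) < s /\
               Rabs (yw - y1) < s /\ Rabs (yw - y2) < s).
  { pose proof (Rabs_pos (y1 - y2)); pose proof (Rabs_pos (yw - y1));
      pose proof (Rabs_pos (yw - y2)); unfold s; lra. }
  destruct Hs as (Hsx & Hs12%Rabs_def2 & Hs1%Rabs_def2 & Hs2%Rabs_def2).
  destruct (Rlt_or_le y2 y1) as [H21 | H12].
  - destruct (Rlt_or_le y2 yw).
    + exists x1, y2, s; square_arith.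
    + exists (x2 - s), (y1 - s), s; square_arith.
  - assert (y1 < y2) by (destruct H12; [lra | congruence]).
    destruct (Rlt_or_le y1 yw).
    + exists (x2 - s), y1, s; square_arith.
    + exists x1, (y2 - s), s; square_arith.
Qed.

Lemma witness_square_of_strictly_between_x (p q w : point) :
  strictly_between (xc w) (xc p) (xc q) -> yc p <> yc q ->
  witness_square p q w.
Proof.
  intros [Hb | Hb] Hy.
  - exact (witness_square_of_x_between p q w Hb Hy).
  - apply witness_square_sym, witness_square_of_x_between; auto.
Qed.

Lemma witness_square_of_strictly_between_y (p q w : point) :
  strictly_between (yc w) (yc p) (yc q) -> xc p <> xc q ->
  witness_square p q w.
Proof.
  intros Hb Hx; apply witness_square_swap_xy.
  exact (witness_square_of_strictly_between_x (swap_xy p) (swap_xy q) (swap_xy w) Hb Hx).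
Qed.

Theorem mainTheorem8 (P W : list point) (p q : point) :
  general_position P W ->
  In p P -> In q P -> p <> q ->
  (exists w, In w W /\
     (strictly_between (xc w) (xc p) (xc q) \/
      strictly_between (yc w) (yc p) (yc q))) ->
  SGplus_edge P W p q.
Proof.
  intros HG Hp Hq Hpq (w & Hw & Hb).
  destruct (HG p q) as [Hx Hy]; try apply in_or_app; auto.
  assert (Hsq : witness_square p q w).
  { destruct Hb as [Hb | Hb].
    - exact (witness_square_of_strictly_between_x p q w Hb Hy).
    - exact (witness_square_of_strictly_between_y p q w Hb Hx). }
  destruct Hsq as (a & b & s & Hs & Hbp & Hbq & Hiw).
  split; [exact Hp |]; split; [exact Hq |]; split; [exact Hpq |].
  exists a, b, s; eauto 6.
Qed.
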